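(* Let $H=\{\lambda\in B_{1/\sqrt2}(0):\ \mathrm{Re}(\lambda)>0,\ \mathrm{Im}(\lambda)>0\}\setminus B_{2/3}(1/3)$. For every $\lambda\in H$ there exist real numbers $a\ge1$ and $b\ge 1/2$ such that $$R_{a,b}\subset \lambda R_{a,b}\cup(\lambda R_{a,b}-1)\cup(\lambda R_{a,b}+1).$$
   Context: $B_r(z_0)$ is the open disc of radius $r$ centered at $z_0$. For $a,b>0$, $R_{a,b}\subset\mathbb C$ is the closed rectangle centered at the origin with vertices $\pm a\pm ib$. For a set $E$, $\lambda E+c=\{\lambda z+c: z\in E\}$. *)

From Stdlib Require Import Reals.
From Coquelicot Require Import Coquelicot.
Open Scope R_scope.

Definition disc (z0 : C) (r : R) (z : C) : Prop := Cmod (z - z0)%C < r.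

Definition rect (a b : R) (z : C) : Prop :=
  Rabs (Re z) <= a /\ Rabs (Im z) <= b.

Definition affine_image (lam c : C) (E : C -> Prop) (z : C) : Prop :=
  exists w : C, E w /\ z = (lam * w + c)%C.

Definition Hset (lam : C) : Prop :=
  disc 0%C (1 / sqrt 2) lam /\ 0 < Re lam /\ 0 < Im lam /\
  ~ disc (RtoC (1/3)) (2/3) lam.

(* Write λ = x + iy, s = |λ|² and, for c ∈ {-1, 0, 1}, q = (z - c)/λ.  Since
   y Re q = Im z - x Im q, a point z of R_{a,b} with |Im q| ≤ b already has
   |Re q| ≤ a as soon as b (1 + x) ≤ a y.  The condition |Im q| ≤ b says that
   t = y Re z - x Im z lies within b s of c y, and |t| ≤ a y + b x.  With
   d = 1 + 2x - s, a = (1 + x)/d and b = y/d one gets a y = b (1 + x) and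
   a y + b x = y + b s, so the three intervals cover the range of t once
   y ≤ 2 b s, i.e. d ≤ 2s, which is exactly λ ∉ B_{2/3}(1/3); a ≥ 1 and
   b ≥ 1/2 follow from |λ|² < 1/2. *)
From Pilot Require Import Defs.
From Stdlib Require Import Reals Lra Psatz.
From Coquelicot Require Import Coquelicot.
Open Scope R_scope.

Lemma disc_iff_sqr (z0 z : C) (r : R) :
  0 <= r -> Defs.disc z0 r z <-> Re (z - z0)%C ^ 2 + Im (z - z0)%C ^ 2 < r ^ 2.
Proof.
  intros Hr; unfold Defs.disc; rewrite <- Cmod2_alt.
  pose proof (Cmod_ge_0 (z - z0)%C).
  split; intros Hsq; nra.
Qed.

Lemma Hset_coords (x y : R) :
  Hset (x, y) ->
  0 < x /\ 0 < y /\ x ^ 2 + y ^ 2 < 1 / 2 /\ 1 + 2 * x <= 3 * (x ^ 2 + y ^ 2).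
Proof.
  intros [Hin [Hx [Hy Hout]]]; simpl in Hx, Hy.
  assert (Hsqrt2 : 0 < sqrt 2) by (apply sqrt_lt_R0; lra).
  rewrite disc_iff_sqr in Hin by (apply Rlt_le, Rdiv_lt_0_compat; lra).
  rewrite disc_iff_sqr in Hout by lra.
  replace ((1 / sqrt 2) ^ 2) with (1 / 2) in Hin
    by (field_simplify; [rewrite pow2_sqrt by lra; lra | lra]).
  simpl in Hin, Hout |- *.
  repeat split; try lra; nra.
Qed.

Lemma rect_of_Im_bounds (lam q : C) (a b : R) :
  0 <= Re lam -> 0 < Im lam -> b * (1 + Re lam) <= a * Im lam ->
  Rabs (Im (lam * q)) <= b -> Rabs (Im q) <= b -> rect a b q.
Proof.
  destruct lam as [x y], q as [q1 q2]; simpl.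
  intros Hx Hy Hab Himg Hq; split; [|exact Hq].
  apply Rabs_le_between in Himg; apply Rabs_le_between in Hq.
  apply Rabs_le_between.
  assert (Hxq : - (x * b) <= x * q2 <= x * b) by (split; nra).
  assert (Hyq : - (a * y) <= y * q1 <= a * y) by lra.
  simpl; split; nra.
Qed.

Lemma Im_div_mul_sqr (w lam : C) :
  lam <> 0%C ->
  Im (w / lam) * (Re lam ^ 2 + Im lam ^ 2) = Im w * Re lam - Re w * Im lam.
Proof.
  intros Hlam.
  assert (Hs : Re lam ^ 2 + Im lam ^ 2 <> 0).
  { rewrite <- Cmod2_alt; apply pow_nonzero; intros H0; apply Hlam, Cmod_eq_0, H0. }
  destruct lam as [x y], w as [u v]; simpl in *.
  field; contradict Hs; lra.
Qed.

Lemma affine_image_of_quotient (lam c : C) (E : C -> Prop) (z : C) :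
  lam <> 0%C -> E ((z - c) / lam)%C -> affine_image lam c E z.
Proof.
  intros Hlam HE; exists ((z - c) / lam)%C; split; [exact HE | field; exact Hlam].
Qed.

Lemma three_intervals_cover (t y r : R) :
  y <= 2 * r -> Rabs t <= y + r ->
  Rabs t <= r \/ Rabs (t + y) <= r \/ Rabs (t - y) <= r.
Proof.
  intros Hy Ht; rewrite !Rabs_le_between in *.
  destruct (Rle_dec t r), (Rle_dec (- r) t); lra.
Qed.

Lemma affine_image_rect (lam z : C) (a b c : R) :
  0 <= Re lam -> 0 < Im lam -> b * (1 + Re lam) <= a * Im lam ->
  Rabs (Im z) <= b ->
  Rabs (Re z * Im lam - Im z * Re lam - c * Im lam) <= b * (Re lam ^ 2 + Im lam ^ 2) ->
  affine_image lam (RtoC c) (rect a b) z.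
Proof.
  intros Hx Hy Hab Hv Ht.
  assert (Hlam : lam <> 0%C) by (intros H0; rewrite H0 in Hy; simpl in Hy; lra).
  assert (Hs : 0 < Re lam ^ 2 + Im lam ^ 2) by nra.
  assert (Hre : Re (z - RtoC c) = Re z - c) by (destruct z; simpl; ring).
  assert (Him : Im (z - RtoC c) = Im z) by (destruct z; simpl; ring).
  apply affine_image_of_quotient; [exact Hlam|].
  apply rect_of_Im_bounds with (1 := Hx) (2 := Hy) (3 := Hab).
  - replace (lam * ((z - c) / lam))%C with (z - c)%C by (field; exact Hlam).
    rewrite Him; exact Hv.
  - apply (Rmult_le_reg_r _ _ _ Hs).
    rewrite <- (Rabs_pos_eq _ (Rlt_le _ _ Hs)) at 1.
    rewrite <- Rabs_mult, Im_div_mul_sqr, Hre, Him, <- Rabs_Ropp by exact Hlam.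
    replace (- (Im z * Re lam - (Re z - c) * Im lam))
      with (Re z * Im lam - Im z * Re lam - c * Im lam) by ring.
    exact Ht.
Qed.

Lemma rect_in_three_translates (lam : C) (a b : R) :
  let s := Re lam ^ 2 + Im lam ^ 2 in
  0 <= Re lam -> 0 < Im lam -> b * (1 + Re lam) <= a * Im lam ->
  a * Im lam + b * Re lam <= Im lam + b * s -> Im lam <= 2 * b * s ->
  forall z : C, rect a b z ->
    affine_image lam 0%C (rect a b) z \/
    affine_image lam (RtoC (-1)) (rect a b) z \/
    affine_image lam (RtoC 1) (rect a b) z.
Proof.
  intros s Hx Hy Hab Hreach Hoverlap z [Hu Hv].
  set (t := Re z * Im lam - Im z * Re lam).
  assert (Ht : Rabs t <= Im lam + b * s).
  { apply Rabs_le_between in Hu; apply Rabs_le_between in Hv.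
    apply Rabs_le_between; unfold t; split; nra. }
  rewrite Rmult_assoc in Hoverlap.
  destruct (three_intervals_cover t (Im lam) (b * s) Hoverlap Ht) as [H|[H|H]];
    [left | right; left | right; right];
    apply affine_image_rect; try assumption.
  - fold t s; now replace (t - 0 * Im lam) with t by ring.
  - fold t s; now replace (t - -1 * Im lam) with (t + Im lam) by ring.
  - fold t s; now replace (t - 1 * Im lam) with (t - Im lam) by ring.
Qed.

Section CoverParameters.

Variables x y : R.
Hypothesis Hx : 0 < x.
Hypothesis Hy : 0 < y.
Hypothesis Hsmall : x ^ 2 + y ^ 2 < 1 / 2.
Hypothesis Hfar : 1 + 2 * x <= 3 * (x ^ 2 + y ^ 2).

Let s := x ^ 2 + y ^ 2.
Let d := 1 + 2 * x - s.

Definition cover_width := (1 + x) / d.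
Definition cover_height := y / d.

Let d_pos : 0 < d.
Proof. unfold d, s; lra. Qed.

Let cover_width_mul : cover_width * d = 1 + x.
Proof. unfold cover_width; field; lra. Qed.

Let cover_height_mul : cover_height * d = y.
Proof. unfold cover_height; field; lra. Qed.

Lemma cover_width_ge1 : 1 <= cover_width.
Proof.
  apply (Rmult_le_reg_r d); [exact d_pos|].
  rewrite cover_width_mul; unfold d, s; nra.
Qed.

Lemma cover_height_ge_half : 1 / 2 <= cover_height.
Proof.
  apply (Rmult_le_reg_r d); [exact d_pos|].
  assert (Hy2 : 1 / 4 <= y ^ 2) by nra.
  rewrite cover_height_mul; unfold d, s; nra.
Qed.

Lemma cover_height_width : cover_height * (1 + x) = cover_width * y.
Proof. rewrite <- cover_width_mul, <- cover_height_mul; ring. Qed.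

Lemma cover_reach : cover_width * y + cover_height * x = y + cover_height * s.
Proof.
  rewrite <- cover_height_width, <- cover_height_mul at 1; unfold d; ring.
Qed.

Lemma cover_overlap : y <= 2 * cover_height * s.
Proof.
  rewrite <- cover_height_mul.
  assert (0 <= cover_height) by (pose proof cover_height_ge_half; lra).
  assert (d <= 2 * s) by (unfold d, s in *; lra).
  nra.
Qed.

End CoverParameters.

Theorem mainTheorem4 :
  forall lam : C, Hset lam ->
  exists a b : R, 1 <= a /\ 1/2 <= b /\
    forall z : C, rect a b z ->
      affine_image lam 0%C (rect a b) z \/
      affine_image lam (RtoC (-1)) (rect a b) z \/
      affine_image lam (RtoC 1) (rect a b) z.
Proof.
  intros [x y] Hlam.
  destruct (Hset_coords x y Hlam) as [Hx [Hy [Hsmall Hfar]]].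
  exists (cover_width x y), (cover_height x y).
  split; [apply cover_width_ge1; assumption|].
  split; [apply cover_height_ge_half; assumption|].
  apply rect_in_three_translates; simpl.
  - lra.
  - exact Hy.
  - rewrite cover_height_width by assumption; lra.
  - rewrite cover_reach by assumption; lra.
  - apply cover_overlap; assumption.
Qed.
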